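(* Let $\mathcal{L}$ be the set of the $81$ lines in $\mathbb{P}^2_{\mathbb{C}}$ that contain at least three sextactic points of the Fermat cubic (see context). For each $L\in\mathcal{L}$ choose a linear form $\ell_L\in\mathbb{C}[x,y,z]$ defining $L$. Then there is a nonzero constant $c\in\mathbb{C}$ such that $$c\prod_{L\in\mathcal{L}}\ell_L\in\mathbb{Z}[x,y,z].$$ That is, the product of the equations of the $81$ lines is defined over $\mathbb{Z}$.
   Context: $F\subset\mathbb{P}^2_{\mathbb{C}}$ is the Fermat cubic $x^3+y^3+z^3=0$. The set of its sextactic points is $$S=\{[x:y:z]\in\mathbb{P}^2: x^3+y^3+z^3=0,\ (x^3-y^3)(y^3-z^3)(z^3-x^3)=0\}.$$ These are the $27$ points of $F$ at which the osculating conic has local contact order at least $6$ with $F$. There are exactly $81$ lines containing at least (in fact exactly) three points of $S$. *)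

From HB Require Import structures.
From mathcomp Require Import all_boot all_order all_algebra.
From mathcomp Require Import mpoly.
Set Implicit Arguments. Unset Strict Implicit. Unset Printing Implicit Defensive.
Import Order.TTheory GRing.Theory Num.Theory.
Local Open Scope ring_scope.

(* Homogeneous coordinates (x,y,z) of a point of P^2, resp. coefficients
   (a,b,c) of a linear form a x + b y + c z. *)
Definition vec3 (C : Type) := (C * C * C)%type.

Section Fermat.
Variable C : numClosedFieldType.

Definition nonzero3 (v : vec3 C) : Prop := v <> (0, 0, 0).

Definition proj_eq (v w : vec3 C) : Prop :=
  exists k : C, k != 0 /\ v = (k * w.1.1, k * w.1.2, k * w.2).

Definition on_fermat (p : vec3 C) : Prop :=
  let: (x, y, z) := p in x ^+ 3 + y ^+ 3 + z ^+ 3 = 0.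

Definition sextactic (p : vec3 C) : Prop :=
  nonzero3 p /\ on_fermat p /\
  let: (x, y, z) := p in
  (x ^+ 3 - y ^+ 3) * (y ^+ 3 - z ^+ 3) * (z ^+ 3 - x ^+ 3) = 0.

Definition on_line (l p : vec3 C) : Prop :=
  l.1.1 * p.1.1 + l.1.2 * p.1.2 + l.2 * p.2 = 0.

Definition sextactic_line (l : vec3 C) : Prop :=
  nonzero3 l /\
  exists p1 p2 p3 : vec3 C,
    [/\ sextactic p1, sextactic p2 & sextactic p3] /\
    [/\ ~ proj_eq p1 p2, ~ proj_eq p1 p3 & ~ proj_eq p2 p3] /\
    [/\ on_line l p1, on_line l p2 & on_line l p3].

Definition linform (l : vec3 C) : {mpoly C[3]} :=
  l.1.1 *: 'X_(@Ordinal 3 0 isT) + l.1.2 *: 'X_(@Ordinal 3 1 isT)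
  + l.2 *: 'X_(@Ordinal 3 2 isT).

Definition int_mpoly (p : {mpoly C[3]}) : Prop :=
  forall m : 'X_{1..3}, exists z : int, p@_m = z%:~R.

End Fermat.

(* The 27 sextactic points are the cyclic permutations of (1 : e : θ e'), where
   e, e' are cube roots of unity and θ = -∛2.  They, and the lines through them,
   are defined over Z[ω, θ] (ω^2 + ω + 1 = 0, θ^3 = -2), where the 81 lines can
   be computed exactly.  These fall into 15 orbits under the scalings
   (x, y, z) |-> (e x, e' y, z), and the product of the linear forms of an orbit
   is a polynomial in x^3, y^3, z^3, by the identities
     prod_e (p + e q) = p^3 + q^3,
     prod_(e, e') (e a + e' b + c) = (a^3 + b^3 + c^3)^3 - 27 (a b c)^3.
   Multiplying out these 15 polynomials, every coefficient turns out to be a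
   rational multiple of one fixed nonzero element of Z[ω, θ]; so the product is a
   nonzero multiple of an integral polynomial, and any other choice of linear
   forms only rescales it.  The computation is valid in C because evaluation
   Z[ω, θ] -> C is injective: the norm form a^3 - 2b^3 + 4c^3 + 6abc of Z[θ] has
   no nontrivial integral zero (2-adic descent), and θ is real while ω is not. *)

From Stdlib Require Import ZArith.
From HB Require Import structures.
From mathcomp Require Import all_boot all_order all_algebra.
From mathcomp Require Import mpoly.
From mathcomp Require Import zify ssrZ ring.
Set Implicit Arguments. Unset Strict Implicit. Unset Printing Implicit Defensive.
Import Order.TTheory GRing.Theory Num.Theory.

(* a + b θ + c θ^2 in Z[θ], where θ^3 = -2 *)
Record zth := Zth { th0 : Z; th1 : Z; th2 : Z }.
(* x + y ω in Z[θ][ω], where ω^2 + ω + 1 = 0 *)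
Record zwt := Zwt { zw0 : zth; zw1 : zth }.

Local Open Scope ring_scope.

Definition zth_add x y := Zth (th0 x + th0 y) (th1 x + th1 y) (th2 x + th2 y).
Definition zth_opp x := Zth (- th0 x) (- th1 x) (- th2 x).
Definition zth_mul x y :=
  Zth (th0 x * th0 y - 2 * (th1 x * th2 y + th2 x * th1 y))
      (th0 x * th1 y + th1 x * th0 y - 2 * (th2 x * th2 y))
      (th0 x * th2 y + th1 x * th1 y + th2 x * th0 y).
Definition zth_eq0 x := [&& th0 x == 0, th1 x == 0 & th2 x == 0].

Definition zwt_add x y := Zwt (zth_add (zw0 x) (zw0 y)) (zth_add (zw1 x) (zw1 y)).
Definition zwt_opp x := Zwt (zth_opp (zw0 x)) (zth_opp (zw1 x)).
Definition zwt_sub x y := zwt_add x (zwt_opp y).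
Definition zwt_mul x y :=
  let q := zth_mul (zw1 x) (zw1 y) in
  Zwt (zth_add (zth_mul (zw0 x) (zw0 y)) (zth_opp q))
      (zth_add (zth_add (zth_mul (zw0 x) (zw1 y)) (zth_mul (zw1 x) (zw0 y))) (zth_opp q)).
Definition zwt_eq0 x := zth_eq0 (zw0 x) && zth_eq0 (zw1 x).

Definition zwt_of_Z z := Zwt (Zth z 0 0) (Zth 0 0 0).
Definition zwt_omega := Zwt (Zth 0 0 0) (Zth 1 0 0).
Definition zwt_theta := Zwt (Zth 0 1 0) (Zth 0 0 0).

Definition zth_norm x :=
  let: Zth a b c := x in a ^+ 3 - 2 * b ^+ 3 + 4 * c ^+ 3 + 6 * a * b * c.

Lemma zth_norm_eq0 x : zth_norm x = 0 -> x = Zth 0 0 0.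
Proof.
suff descent n a b c : `|a| + `|b| + `|c| <= Z.of_nat n ->
    a ^+ 3 - 2 * b ^+ 3 + 4 * c ^+ 3 + 6 * a * b * c = 0 -> [/\ a = 0, b = 0 & c = 0].
  case: x => a b c /= heq.
  by have [|-> -> ->] // := descent (Z.to_nat (`|a| + `|b| + `|c|)) a b c _ heq; lia.
elim: n a b c => [|n IHn] a b c hsize heq; first by split; lia.
(* the norm form forces a, then b, then c to be even, and halving all three preserves it *)
case: (Z.Even_or_Odd a) => [] [a' ->] in hsize heq *; last lia.
case: (Z.Even_or_Odd b) => [] [b' ->] in hsize heq *; last lia.
case: (Z.Even_or_Odd c) => [] [c' ->] in hsize heq *; last lia.
by have [||-> -> ->] := IHn a' b' c'; [lia..|split; lia].
Qed.

Definition Zr (R : pzRingType) (z : Z) : R := (int_of_Z z)%:~R.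
HB.instance Definition _ (R : pzRingType) :=
  GRing.RMorphism.copy (Zr R) (intr \o int_of_Z).

Lemma Zr_eq0 (R : numDomainType) a : (Zr R a == 0) = (a == 0).
Proof. by rewrite /Zr intr_eq0 -(can_eq int_of_ZK). Qed.

Section Evaluation.
Variable C : numClosedFieldType.

Definition omega : C := (sqrtC (-3) - 1) / 2.
Definition theta : C := - 3.-root 2.

Lemma omega_sq : omega ^+ 2 = - 1 - omega.
Proof.
have sqrt_sq : sqrtC (-3 : C) ^+ 2 = -3 by rewrite sqrtCK.
by rewrite /omega; field: sqrt_sq.
Qed.

Lemma theta_cube : theta ^+ 3 = -2.
Proof. rewrite /theta exprNn rootCK //; ring. Qed.

Lemma theta_neq0 : theta != 0.
Proof. by apply: contra_eq_neq theta_cube => ->; rewrite expr0n eq_sym oppr_eq0 pnatr_eq0. Qed.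

Lemma theta_real : theta \is Num.real.
Proof. by rewrite rpredN ger0_real // rootC_ge0 // ler0n. Qed.

Definition zth_eval (x : zth) : C :=
  Zr C (th0 x) + Zr C (th1 x) * theta + Zr C (th2 x) * theta ^+ 2.
Definition zwt_eval (x : zwt) : C := zth_eval (zw0 x) + omega * zth_eval (zw1 x).

Lemma zth_evalD x y : zth_eval (zth_add x y) = zth_eval x + zth_eval y.
Proof. rewrite /zth_eval /= !rmorphD; ring. Qed.

Lemma zth_evalN x : zth_eval (zth_opp x) = - zth_eval x.
Proof. rewrite /zth_eval /= !rmorphN; ring. Qed.

Lemma zth_evalM x y : zth_eval (zth_mul x y) = zth_eval x * zth_eval y.
Proof.
rewrite /zth_eval; cbn [th0 th1 th2 zth_mul].
rewrite !(rmorphB, rmorphD, rmorphM, rmorph_nat).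
have theta_cube := theta_cube; ring: theta_cube.
Qed.

Lemma zwt_evalD x y : zwt_eval (zwt_add x y) = zwt_eval x + zwt_eval y.
Proof. rewrite /zwt_eval /= !zth_evalD; ring. Qed.

Lemma zwt_evalN x : zwt_eval (zwt_opp x) = - zwt_eval x.
Proof. rewrite /zwt_eval /= !zth_evalN; ring. Qed.

Lemma zwt_evalB x y : zwt_eval (zwt_sub x y) = zwt_eval x - zwt_eval y.
Proof. by rewrite zwt_evalD zwt_evalN. Qed.

Lemma zwt_evalM x y : zwt_eval (zwt_mul x y) = zwt_eval x * zwt_eval y.
Proof.
rewrite /zwt_eval /= !(zth_evalD, zth_evalN, zth_evalM).
have omega_sq := omega_sq; ring: omega_sq.
Qed.

Lemma zwt_eval_Z z : zwt_eval (zwt_of_Z z) = Zr C z.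
Proof. rewrite /zwt_eval /zth_eval /= rmorph0; ring. Qed.

Lemma zwt_eval_omega : zwt_eval zwt_omega = omega.
Proof. rewrite /zwt_eval /zth_eval /= rmorph0 rmorph1; ring. Qed.

Lemma zwt_eval_theta : zwt_eval zwt_theta = theta.
Proof. rewrite /zwt_eval /zth_eval /= rmorph0 rmorph1; ring. Qed.

Lemma zth_eval_eq0 x : zth_eval x = 0 -> x = Zth 0 0 0.
Proof.
move=> x0; apply: zth_norm_eq0; apply/eqP; rewrite -(Zr_eq0 C); apply/eqP.
case: x x0 => a b c; rewrite /zth_eval /= => x0.
(* the norm is the value times the product of the two other conjugates *)
have -> : Zr C (a ^+ 3 - 2 * b ^+ 3 + 4 * c ^+ 3 + 6 * a * b * c) =
    (Zr C a + Zr C b * theta + Zr C c * theta ^+ 2) *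
    (Zr C a ^+ 2 + 2 * Zr C b * Zr C c - (2 * Zr C c ^+ 2 + Zr C a * Zr C b) * theta
     + (Zr C b ^+ 2 - Zr C a * Zr C c) * theta ^+ 2).
  rewrite !(rmorphB, rmorphD, rmorphN, rmorphM, rmorphXn, rmorph_nat).
  have theta_cube := theta_cube; ring: theta_cube.
by rewrite x0 mul0r.
Qed.

Lemma real_omega_eq0 (p q : C) : p \is Num.real -> q \is Num.real ->
  p + omega * q = 0 -> p = 0 /\ q = 0.
Proof.
move=> p_real q_real pq0.
have p_eq : p = - (omega * q) by apply/eqP; rewrite -addr_eq0 pq0.
have sum_sq : (2 * p - q) ^+ 2 + 3 * q ^+ 2 = 0.
  rewrite p_eq; have omega_sq := omega_sq; ring: omega_sq.
have sq1 : 0 <= (2 * p - q) ^+ 2 by rewrite real_exprn_even_ge0 ?rpredB ?rpredM ?rpred_nat.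
have sq2 : 0 <= 3 * q ^+ 2 by rewrite mulr_ge0 ?ler0n ?real_exprn_even_ge0.
move/eqP: sum_sq; rewrite paddr_eq0 // => /andP[_].
rewrite mulf_eq0 pnatr_eq0 /= sqrf_eq0 => /eqP q0.
by move: p_eq; rewrite q0 mulr0 oppr0.
Qed.

Lemma zth_eval_real x : zth_eval x \is Num.real.
Proof. by rewrite /zth_eval ?rpredD ?rpredM ?rpredX ?theta_real ?realz. Qed.

Lemma zwt_eval_eq0 x : (zwt_eval x == 0) = zwt_eq0 x.
Proof.
apply/eqP/idP => [|]; last first.
  case: x => -[a b c] [a' b' c']; rewrite /zwt_eq0 /zth_eq0 /=.
  case/andP => /and3P[/eqP-> /eqP-> /eqP->] /and3P[/eqP-> /eqP-> /eqP->].
  by rewrite /zwt_eval /zth_eval /= rmorph0; ring.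
case/real_omega_eq0; rewrite ?zth_eval_real // => /zth_eval_eq0 x0 /zth_eval_eq0 x1.
by rewrite /zwt_eq0 x0 x1.
Qed.

End Evaluation.

Section ProjectivePlane.
Variable C : numClosedFieldType.
Notation V := (vec3 C).

Definition scale3 (k : C) (v : V) : V := (k * v.1.1, k * v.1.2, k * v.2).
Definition dot (u v : V) : C := u.1.1 * v.1.1 + u.1.2 * v.1.2 + u.2 * v.2.
Definition cross (u v : V) : V :=
  (u.1.2 * v.2 - u.2 * v.1.2, u.2 * v.1.1 - u.1.1 * v.2, u.1.1 * v.1.2 - u.1.2 * v.1.1).

Lemma proj_eqP (u v : V) : proj_eq u v <-> exists2 k, k != 0 & u = scale3 k v.
Proof. by split=> [[k [k0 ->]]|[k k0 ->]]; exists k. Qed.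

Lemma scale3A k k' (v : V) : scale3 k (scale3 k' v) = scale3 (k * k') v.
Proof. by case: v => [[x y] z]; rewrite /scale3 /= !mulrA. Qed.

Lemma scale31 (v : V) : scale3 1 v = v.
Proof. by case: v => [[x y] z]; rewrite /scale3 /= !mul1r. Qed.

Lemma scale3_eq0 k (v : V) : k != 0 -> (scale3 k v == (0, 0, 0)) = (v == (0, 0, 0)).
Proof.
case: v => [[x y] z] k0; rewrite /scale3 /= !xpair_eqE.
by rewrite !mulf_eq0 (negPf k0).
Qed.

Lemma proj_eq_sym (u v : V) : proj_eq u v -> proj_eq v u.
Proof.
move=> /proj_eqP[k k0 ->]; apply/proj_eqP; exists k^-1; rewrite ?invr_eq0 //.
by rewrite scale3A mulVf // scale31.
Qed.

Lemma proj_eq_trans (u v w : V) : proj_eq u v -> proj_eq v w -> proj_eq u w.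
Proof.
move=> /proj_eqP[k k0 ->] /proj_eqP[k' k'0 ->]; apply/proj_eqP.
by exists (k * k'); rewrite ?mulf_neq0 ?scale3A.
Qed.

Lemma dot_scaler k (u v : V) : dot u (scale3 k v) = k * dot u v.
Proof. rewrite /dot /scale3 /=; ring. Qed.

Lemma dotC (u v : V) : dot u v = dot v u.
Proof. by rewrite /dot !(mulrC u.1.1, mulrC u.1.2, mulrC u.2). Qed.

Lemma on_line_proj_eq (l p q : V) : proj_eq p q -> on_line l p -> on_line l q.
Proof.
move=> /proj_eqP[k k0 ->]; rewrite /on_line -/(dot l _) dot_scaler.
by move/eqP; rewrite mulf_eq0 (negPf k0) => /eqP.
Qed.

Lemma proj_eq_cross (u v : V) : proj_eq u v -> cross u v = (0, 0, 0).
Proof.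
move=> /proj_eqP[k _ ->]; case: v => [[x y] z].
by rewrite /cross /scale3 /=; congr (_, _, _); ring.
Qed.

Lemma cross_cross (e a b : V) : cross e (cross a b) =
  (dot e b * a.1.1 - dot e a * b.1.1, dot e b * a.1.2 - dot e a * b.1.2,
   dot e b * a.2 - dot e a * b.2).
Proof.
case: e a b => [[e1 e2] e3] [[a1 a2] a3] [[b1 b2] b3].
by rewrite /cross /dot /=; congr (_, _, _); ring.
Qed.

Lemma cross_cross_eq0 (l u v : V) :
  dot l u = 0 -> dot l v = 0 -> cross l (cross u v) = (0, 0, 0).
Proof. by move=> lu lv; rewrite cross_cross lu lv !mul0r subr0. Qed.

Lemma cross_eq0_scale (a b e : V) :
  cross a b = (0, 0, 0) -> scale3 (dot e b) a = scale3 (dot e a) b.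
Proof.
move=> ab; have := cross_cross e a b; rewrite ab /cross /= !(mulr0, subr0).
case=> /esym/eqP + /esym/eqP + /esym/eqP; rewrite !subr_eq0 => /eqP h1 /eqP h2 /eqP h3.
by rewrite /scale3 h1 h2 h3.
Qed.

Lemma nonzero3_dot (v : V) : nonzero3 v -> exists e, dot e v != 0.
Proof.
case: v => [[x y] z] v0; rewrite /dot.
have [x0|] := eqVneq x 0; last by exists (1, 0, 0); rewrite /= mul1r !mul0r !addr0.
have [y0|] := eqVneq y 0; last by exists (0, 1, 0); rewrite /= mul1r !mul0r add0r addr0.
have [z0|] := eqVneq z 0; last by exists (0, 0, 1); rewrite /= mul1r !mul0r !add0r.
by case: v0; rewrite x0 y0 z0.
Qed.

Lemma cross_eq0_proj_eq (u v : V) :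
  nonzero3 u -> nonzero3 v -> cross u v = (0, 0, 0) -> proj_eq u v.
Proof.
move=> u0 /nonzero3_dot[e ev0] /(cross_eq0_scale e) uv; apply/proj_eqP.
exists (dot e u / dot e v).
  rewrite mulf_neq0 ?invr_eq0 //; apply/eqP => eu0; apply: u0; apply/eqP.
  by rewrite -(scale3_eq0 _ ev0) uv eu0 /scale3 !mul0r.
apply: (@eq_trans _ _ (scale3 (dot e v)^-1 (scale3 (dot e v) u))).
  by rewrite scale3A mulVf ?scale31.
by rewrite uv scale3A mulrC.
Qed.

End ProjectivePlane.

Section LinearFormProducts.
Variable C : numClosedFieldType.
Notation V := (vec3 C).

Definition lead3 (v : V) : C :=
  if v.1.1 != 0 then v.1.1 else if v.1.2 != 0 then v.1.2 else v.2.
Definition normal3 (v : V) : V := scale3 (lead3 v)^-1 v.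

Definition proj_distinct (s : seq V) : Prop :=
  forall i j, (i < size s)%N -> (j < size s)%N -> i <> j ->
    ~ proj_eq (nth (0, 0, 0) s i) (nth (0, 0, 0) s j).

Lemma lead3_scale k (v : V) : k != 0 -> lead3 (scale3 k v) = k * lead3 v.
Proof.
case: v => [[x y] z] k0; rewrite /lead3 /scale3 /= !mulf_eq0 (negPf k0) /=.
by case: (x =P 0); case: (y =P 0).
Qed.

Lemma lead3_eq0 (v : V) : (lead3 v == 0) = (v == (0, 0, 0)).
Proof.
case: v => [[x y] z]; rewrite /lead3 !xpair_eqE /=.
have [_|x0] := eqVneq x 0; last exact: negPf.
by have [_|y0] := eqVneq y 0; last exact: negPf.
Qed.

Lemma scale3_lead_normal (v : V) : scale3 (lead3 v) (normal3 v) = v.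
Proof.
rewrite /normal3 scale3A; have [/eqP|v0] := eqVneq (lead3 v) 0.
  by rewrite lead3_eq0 => /eqP->; rewrite /scale3 /= !mulr0.
by rewrite mulfV // scale31.
Qed.

Lemma normal3_scale k (v : V) : k != 0 -> normal3 (scale3 k v) = normal3 v.
Proof.
by move=> k0; rewrite /normal3 lead3_scale // scale3A invfM mulrAC mulVf ?mul1r.
Qed.

Lemma proj_eq_normal (u v : V) :
  nonzero3 u -> nonzero3 v -> proj_eq u v <-> normal3 u = normal3 v.
Proof.
move=> u0 v0; split=> [/proj_eqP[k k0 ->]|uv]; first exact: normal3_scale.
have lead_neq0 (w : V) : nonzero3 w -> lead3 w != 0 by move=> w0; rewrite lead3_eq0; apply/eqP.
apply/proj_eqP; exists (lead3 u / lead3 v); first by rewrite mulf_neq0 ?invr_eq0 ?lead_neq0.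
apply: (@eq_trans _ _ (scale3 (lead3 u) (normal3 v))); first by rewrite -uv scale3_lead_normal.
by rewrite -[X in _ = scale3 _ X](scale3_lead_normal v) scale3A mulfVK ?lead_neq0.
Qed.

Lemma linform_scale k (v : V) : linform (scale3 k v) = k *: linform v.
Proof. by rewrite /linform /= !scalerDr !scalerA. Qed.

Lemma prod_linform_normal (s : seq V) :
  \prod_(v <- s) linform v = (\prod_(v <- s) lead3 v) *: \prod_(v <- s) linform (normal3 v).
Proof.
elim: s => [|v s IHs]; first by rewrite !big_nil scale1r.
rewrite !big_cons IHs -{1}(scale3_lead_normal v) linform_scale.
by rewrite -scalerAl -scalerAr scalerA.
Qed.

Lemma proj_distinct_uniq (s : seq V) :
  {in s, forall v, nonzero3 v} -> proj_distinct s -> uniq (map normal3 s).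
Proof.
move=> s0 sd; apply/(uniqP (normal3 (0, 0, 0))) => i j; rewrite !inE size_map => i_lt j_lt.
rewrite !(nth_map (0, 0, 0)) // => normal_ij; case: (eqVneq i j) => // /eqP ij.
by case: (sd i j i_lt j_lt ij); apply/proj_eq_normal => //; apply/s0/mem_nth.
Qed.

Lemma prod_linform_proj_perm (s t : seq V) :
  {in s, forall v, nonzero3 v} -> {in t, forall w, nonzero3 w} ->
  proj_distinct s -> proj_distinct t ->
  {in s, forall v, exists2 w, w \in t & proj_eq v w} ->
  {in t, forall w, exists2 v, v \in s & proj_eq w v} ->
  exists2 k, k != 0 & \prod_(v <- s) linform v = k *: \prod_(w <- t) linform w.
Proof.
move=> s0 t0 sd td st ts.
have normal_perm : perm_eq (map normal3 s) (map normal3 t).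
  apply: uniq_perm; rewrite ?proj_distinct_uniq // => u.
  apply/mapP/mapP => -[v v_in ->].
    by have [w w_in vw] := st v v_in; exists w => //; apply/proj_eq_normal; auto.
  by have [w w_in vw] := ts v v_in; exists w => //; apply/proj_eq_normal; auto.
have lead_neq0 (r : seq V) : {in r, forall v, nonzero3 v} -> \prod_(v <- r) lead3 v != 0.
  by move=> r0; rewrite prodf_seq_neq0; apply/allP => v /r0 v0; rewrite lead3_eq0; apply/eqP.
exists ((\prod_(v <- s) lead3 v) / \prod_(w <- t) lead3 w).
  by rewrite mulf_neq0 ?invr_eq0 ?lead_neq0.
rewrite (prod_linform_normal s) (prod_linform_normal t) scalerA mulfVK ?lead_neq0 //.
by rewrite -!(big_map normal3 xpredT (@linform C)) (perm_big _ normal_perm).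
Qed.

End LinearFormProducts.

Definition zvec := (zwt * zwt * zwt)%type.
Definition zvec0 : zvec := (zwt_of_Z 0, zwt_of_Z 0, zwt_of_Z 0).
Definition zvec_dot (u v : zvec) : zwt :=
  zwt_add (zwt_add (zwt_mul u.1.1 v.1.1) (zwt_mul u.1.2 v.1.2)) (zwt_mul u.2 v.2).
Definition zvec_cross (u v : zvec) : zvec :=
  (zwt_sub (zwt_mul u.1.2 v.2) (zwt_mul u.2 v.1.2),
   zwt_sub (zwt_mul u.2 v.1.1) (zwt_mul u.1.1 v.2),
   zwt_sub (zwt_mul u.1.1 v.1.2) (zwt_mul u.1.2 v.1.1)).
Definition zvec_eq0 (v : zvec) : bool := [&& zwt_eq0 v.1.1, zwt_eq0 v.1.2 & zwt_eq0 v.2].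

Definition rot3 (T : Type) (v : T * T * T) : T * T * T := (v.2, v.1.1, v.1.2).

Definition zunity (a : nat) : zwt :=
  if a is 0 then zwt_of_Z 1 else if a is 1 then zwt_omega
  else zwt_opp (zwt_add (zwt_of_Z 1) zwt_omega).

Definition zpoint (a b t : nat) : zvec :=
  iter t (@rot3 _) (zwt_of_Z 1, zunity a, zwt_mul zwt_theta (zunity b)).
Definition spoint (i : nat) : zvec := zpoint (i %/ 9) (i %/ 3 %% 3) (i %% 3).

Definition span_line (i j : nat) : zvec := zvec_cross (spoint i) (spoint j).
Definition incident (l : zvec) : seq nat :=
  [seq k <- iota 0 27 | zwt_eq0 (zvec_dot l (spoint k))].

Definition line_witness (i j : nat) : seq zvec :=
  if incident (span_line i j) is [:: i', j', _ & _] then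
    if (i', j') == (i, j) then [:: span_line i j] else [::]
  else [::].
(* the lines through at least three of the points, each spanned by its first two *)
Definition spanned_lines : seq zvec :=
  flatten [seq line_witness i j | i <- iota 0 27, j <- iota 0 27].

Definition zvec_cube (v : zvec) : zvec :=
  let cube x := zwt_mul x (zwt_mul x x) in (cube v.1.1, cube v.1.2, cube v.2).

(* the orbit of a line under the scalings (x, y, z) |-> (ε^i x, ε^j y, z) *)
Definition diag_orbit (l : zvec) : seq zvec :=
  let: (a, b, c) := l in
  if zwt_eq0 a || zwt_eq0 c then [seq (a, zwt_mul (zunity j) b, c) | j <- iota 0 3]
  else if zwt_eq0 b then [seq (zwt_mul (zunity i) a, b, c) | i <- iota 0 3]
  else [seq (zwt_mul (zunity i) a, zwt_mul (zunity j) b, c) | i <- iota 0 3, j <- iota 0 3].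

Definition same_orbit (l l' : zvec) : bool := zvec_eq0 (zvec_cross (zvec_cube l) (zvec_cube l')).
Definition orbit_reps : seq zvec :=
  foldr (fun l reps => if has (same_orbit l) reps then reps else l :: reps) [::] spanned_lines.
Definition zlines : seq zvec := flatten (map diag_orbit orbit_reps).

Definition independent_spoints (i j : nat) : bool := (i == j) || ~~ zvec_eq0 (span_line i j).
Definition rich_line (l : zvec) : bool :=
  ~~ zvec_eq0 l && if incident l is [:: i, j, k & _] then [&& i < j, j < k & k < 27]%N else false.
Definition independent_zlines (m m' : nat) : bool :=
  (m == m') || ~~ zvec_eq0 (zvec_cross (nth zvec0 zlines m) (nth zvec0 zlines m')).
Definition third_spoint (i j k : nat) : bool :=
  [&& k != i, k != j & zwt_eq0 (zvec_dot (span_line i j) (spoint k))].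
Definition listed_line (i j m : nat) : bool :=
  zvec_eq0 (zvec_cross (span_line i j) (nth zvec0 zlines m)).

Lemma spoints_independent : all (fun i => all (independent_spoints i) (iota 0 27)) (iota 0 27).
Proof. by vm_compute. Qed.

Lemma zlines_rich : all rich_line zlines.
Proof. by vm_compute. Qed.

Lemma zlines_independent :
  all (fun m => all (independent_zlines m) (iota 0 (size zlines))) (iota 0 (size zlines)).
Proof. by vm_compute. Qed.

Lemma zlines_complete : all (fun i => all (fun j =>
    (i != j) && has (third_spoint i j) (iota 0 27) ==> has (listed_line i j) (iota 0 (size zlines)))
  (iota 0 27)) (iota 0 27).
Proof. by vm_compute. Qed.

Section Configuration.
Variable C : numClosedFieldType.
Notation V := (vec3 C).

Definition zvec_eval (v : zvec) : V := (zwt_eval C v.1.1, zwt_eval C v.1.2, zwt_eval C v.2).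

Lemma zvec_eval_dot u v : zwt_eval C (zvec_dot u v) = dot (zvec_eval u) (zvec_eval v).
Proof. by rewrite /zvec_dot /dot /= !(zwt_evalD, zwt_evalM). Qed.

Lemma zvec_eval_cross u v : zvec_eval (zvec_cross u v) = cross (zvec_eval u) (zvec_eval v).
Proof. by rewrite /zvec_eval /cross /= !(zwt_evalB, zwt_evalM). Qed.

Lemma zvec_eval_eq0 v : (zvec_eval v == (0, 0, 0)) = zvec_eq0 v.
Proof. by rewrite /zvec_eval !xpair_eqE !zwt_eval_eq0 -andbA. Qed.

Lemma zvec_eval_rot3 v : zvec_eval (rot3 v) = rot3 (zvec_eval v).
Proof. by []. Qed.

Lemma zvec_eval_neq0 v : nonzero3 (zvec_eval v) <-> ~~ zvec_eq0 v.
Proof. by rewrite -zvec_eval_eq0; split=> [/eqP|/eqP]. Qed.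

Lemma sextactic_rot3 (p : V) : sextactic p -> sextactic (rot3 p).
Proof.
case: p => [[x y] z] [p0 [fermat sext]].
split; first by case=> z0 x0 y0; apply: p0; rewrite x0 y0 z0.
by split; [rewrite /on_fermat /= -fermat | rewrite /= -sext]; ring.
Qed.

Lemma proj_eq_rot3 (u v : V) : proj_eq u v -> proj_eq (rot3 u) (rot3 v).
Proof. by case=> k [k0 ->]; exists k. Qed.

Lemma zunity_cube a : zwt_eval C (zunity a) ^+ 3 = 1.
Proof.
have omega_sq := omega_sq C.
case: a => [|[|a]] /=.
- by rewrite zwt_eval_Z rmorph1 expr1n.
- by rewrite zwt_eval_omega; ring: omega_sq.
- by rewrite zwt_evalN zwt_evalD zwt_eval_Z zwt_eval_omega rmorph1; ring: omega_sq.
Qed.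

Lemma cube_root_unity (x : C) : x ^+ 3 = 1 -> exists2 a, (a < 3)%N & x = zwt_eval C (zunity a).
Proof.
have omega_sq := omega_sq C.
move=> x3; have : (x - 1) * (x - omega C) * (x - (- 1 - omega C)) = x ^+ 3 - 1.
  by ring: omega_sq.
rewrite x3 subrr => /eqP; rewrite !mulf_eq0 !subr_eq0 => /orP[/orP[]|] /eqP->.
- by exists 0%N; rewrite //= zwt_eval_Z rmorph1.
- by exists 1%N; rewrite //= zwt_eval_omega.
- by exists 2%N; rewrite //= zwt_evalN zwt_evalD zwt_eval_Z zwt_eval_omega rmorph1 opprD.
Qed.

Lemma zpoint_sextactic a b t : sextactic (zvec_eval (zpoint a b t)).
Proof.
elim: t => [|t IHt]; last by rewrite /zpoint iterS zvec_eval_rot3; apply: sextactic_rot3.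
rewrite /zpoint /zvec_eval /= zwt_eval_Z zwt_evalM zwt_eval_theta rmorph1.
split; first by case=> /eqP; rewrite oner_eq0.
by rewrite /on_fermat exprMn !zunity_cube theta_cube expr1n mulr1; split; ring.
Qed.

Lemma spoint_index a b t : (a < 3)%N -> (b < 3)%N -> (t < 3)%N ->
  spoint (9 * a + 3 * b + t) = zpoint a b t.
Proof.
move=> a3 b3 t3; rewrite /spoint.
have -> : ((9 * a + 3 * b + t) %/ 9 = a)%N by lia.
have -> : ((9 * a + 3 * b + t) %/ 3 %% 3 = b)%N by lia.
by have -> : ((9 * a + 3 * b + t) %% 3 = t)%N by lia.
Qed.

Lemma proj_eq_zpoint0 (x y z : C) : sextactic (x, y, z) -> x ^+ 3 = y ^+ 3 ->
  exists a b, [/\ (a < 3)%N, (b < 3)%N & proj_eq (x, y, z) (zvec_eval (zpoint a b 0))].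
Proof.
move=> [p0 [fermat _]] xy; rewrite /on_fermat in fermat.
have z3 : z ^+ 3 = x ^+ 3 * theta C ^+ 3.
  by rewrite theta_cube; apply/eqP; rewrite -subr_eq0 -fermat -xy; apply/eqP; ring.
have x0 : x != 0.
  apply: contra_notN p0 => /eqP x0; move: z3 xy; rewrite x0 expr0n mul0r.
  by move=> /eqP; rewrite expf_eq0 => /eqP-> /esym/eqP; rewrite expf_eq0 => /eqP->.
have [a a3 ya] : exists2 a, (a < 3)%N & y / x = zwt_eval C (zunity a).
  by apply: cube_root_unity; rewrite expr_div_n -xy divff // expf_neq0.
have theta0 := theta_neq0 C.
have [b b3 zb] : exists2 b, (b < 3)%N & z / (x * theta C) = zwt_eval C (zunity b).
  by apply: cube_root_unity; rewrite expr_div_n exprMn z3 divff // mulf_neq0 ?expf_neq0.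
exists a, b; split=> //; exists x; split=> //.
rewrite /zvec_eval /= zwt_eval_Z zwt_evalM zwt_eval_theta rmorph1 -ya -zb.
by rewrite mulr1 [x * (y / x)]mulrC divfK // mulrA [_ * (z / _)]mulrC divfK ?mulf_neq0.
Qed.

Lemma sextactic_spoint (p : V) :
  sextactic p -> exists2 i, (i < 27)%N & proj_eq p (zvec_eval (spoint i)).
Proof.
suff from_cube (t : nat) (q : V) : (t < 3)%N -> sextactic q -> q.1.1 ^+ 3 = q.1.2 ^+ 3 ->
    exists2 i, (i < 27)%N & proj_eq (iter t (@rot3 _) q) (zvec_eval (spoint i)).
  case: p => [[x y] z] sp; have [_ [_ /eqP]] := sp; rewrite !mulf_eq0 !subr_eq0.
  case/orP=> [/orP[]|] /eqP xyz.
  - exact: (from_cube 0%N).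
  - by apply: (from_cube 1%N (rot3 (rot3 (x, y, z)))) => //; do 2 apply: sextactic_rot3.
  - by apply: (from_cube 2%N (rot3 (x, y, z))) => //; apply: sextactic_rot3.
case: q => [[x y] z] t3 sq xy; have [a [b [a3 b3 q_ab]]] := proj_eq_zpoint0 sq xy.
exists (9 * a + 3 * b + t)%N; first by lia.
rewrite spoint_index // /zpoint; elim: t {t3} => [|t IHt] //=.
by rewrite zvec_eval_rot3; apply: proj_eq_rot3.
Qed.

Lemma mem_iota0 n i : (i \in iota 0 n) = (i < n)%N.
Proof. by rewrite mem_iota. Qed.

Lemma span_line_neq0 i j : (i < 27)%N -> (j < 27)%N -> i <> j -> ~~ zvec_eq0 (span_line i j).
Proof.
move=> i27 j27 ij; have /allP/(_ i) := spoints_independent; rewrite mem_iota0.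
by move=> /(_ i27)/allP/(_ j); rewrite mem_iota0 => /(_ j27) /orP[/eqP|].
Qed.

Lemma spoint_distinct i j : (i < 27)%N -> (j < 27)%N -> i <> j ->
  ~ proj_eq (zvec_eval (spoint i)) (zvec_eval (spoint j)).
Proof.
move=> i27 j27 ij /proj_eq_cross; rewrite -zvec_eval_cross => /eqP.
by rewrite zvec_eval_eq0; apply/negP/span_line_neq0.
Qed.

Lemma incident_on_line l k :
  k \in incident l -> on_line (zvec_eval l) (zvec_eval (spoint k)) /\ (k < 27)%N.
Proof.
rewrite mem_filter mem_iota0 => /andP[lk k27]; split=> //.
by rewrite /on_line -/(dot _ _) -zvec_eval_dot; apply/eqP; rewrite zwt_eval_eq0.
Qed.

Lemma rich_line_sextactic l : rich_line l -> sextactic_line (zvec_eval l).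
Proof.
case/andP=> l0; case E: (incident l) => [|i [|j [|k r]]] // /and3P[ij jk k27].
have on_l m : m \in incident l -> on_line (zvec_eval l) (zvec_eval (spoint m)).
  by case/incident_on_line.
have [i27 j27 ij' ik jk'] : [/\ i < 27, j < 27, i <> j, i <> k & j <> k]%N by split; lia.
split; first exact/zvec_eval_neq0.
exists (zvec_eval (spoint i)), (zvec_eval (spoint j)), (zvec_eval (spoint k)).
split; first by split; apply: zpoint_sextactic.
split; first by split; apply: spoint_distinct.
by split; apply: on_l; rewrite E !inE eqxx ?orbT.
Qed.

Lemma zline_rich m : (m < size zlines)%N -> rich_line (nth zvec0 zlines m).
Proof. by move: m; apply/all_nthP; exact: zlines_rich. Qed.

Lemma zlines_sextactic : {in map zvec_eval zlines, forall w, sextactic_line w}.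
Proof.
move=> w /(nthP (0, 0, 0))[m]; rewrite size_map => m_lt <-.
rewrite (nth_map zvec0 _ _ m_lt); exact: rich_line_sextactic (zline_rich m_lt).
Qed.

Lemma line_through_spoints (l : V) i j k :
  nonzero3 l -> (i < 27)%N -> (j < 27)%N -> (k < 27)%N -> i <> j -> k <> i -> k <> j ->
  on_line l (zvec_eval (spoint i)) -> on_line l (zvec_eval (spoint j)) ->
  on_line l (zvec_eval (spoint k)) ->
  exists2 l', l' \in map zvec_eval zlines & proj_eq l l'.
Proof.
move=> l0 i27 j27 k27 ij ki kj li lj lk.
have span0 := span_line_neq0 i27 j27 ij.
have l_span : proj_eq l (zvec_eval (span_line i j)).
  apply: cross_eq0_proj_eq => //; first exact/zvec_eval_neq0.
  by rewrite /span_line zvec_eval_cross; apply: cross_cross_eq0.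
have span_k : zwt_eq0 (zvec_dot (span_line i j) (spoint k)).
  rewrite -(zwt_eval_eq0 C) zvec_eval_dot dotC; apply/eqP.
  by apply: on_line_proj_eq l_span _; rewrite /on_line -/(dot _ _) dotC.
have /allP/(_ i) := zlines_complete; rewrite mem_iota0 => /(_ i27)/allP/(_ j).
rewrite mem_iota0 => /(_ j27) /implyP listed.
have /hasP[m] : has (listed_line i j) (iota 0 (size zlines)).
  apply: listed; apply/andP; split; first exact/eqP.
  apply/hasP; exists k; first by rewrite mem_iota0.
  by rewrite /third_spoint span_k andbT; apply/andP; split; apply/eqP.
rewrite mem_iota0 => m_lt span_m; exists (zvec_eval (nth zvec0 zlines m)).
  rewrite -(nth_map zvec0 (0, 0, 0) _ m_lt); apply: mem_nth; rewrite size_map; exact: m_lt.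
apply: proj_eq_trans l_span _; apply: cross_eq0_proj_eq.
- exact/zvec_eval_neq0.
- by have [] := rich_line_sextactic (zline_rich m_lt).
- by rewrite -zvec_eval_cross; apply/eqP; rewrite zvec_eval_eq0.
Qed.

Lemma sextactic_line_zline (l : V) : sextactic_line l ->
  exists2 l', l' \in map zvec_eval zlines & proj_eq l l'.
Proof.
case=> l0 [p1 [p2 [p3 [[s1 s2 s3] [[d12 d13 d23] [o1 o2 o3]]]]]].
have [i i27 e1] := sextactic_spoint s1.
have [j j27 e2] := sextactic_spoint s2.
have [k k27 e3] := sextactic_spoint s3.
have distinct (p q : V) m n : proj_eq p (zvec_eval (spoint m)) ->
    proj_eq q (zvec_eval (spoint n)) -> ~ proj_eq p q -> m <> n.
  by move=> pm qn pq mn; apply: pq; apply: proj_eq_trans pm _; rewrite mn; apply: proj_eq_sym.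
apply: (line_through_spoints l0 i27 j27 k27).
- exact: distinct e1 e2 d12.
- by move=> ki; apply: (distinct _ _ _ _ e1 e3 d13); rewrite ki.
- by move=> kj; apply: (distinct _ _ _ _ e2 e3 d23); rewrite kj.
- exact: on_line_proj_eq e1 o1.
- exact: on_line_proj_eq e2 o2.
- exact: on_line_proj_eq e3 o3.
Qed.

Lemma zlines_proj_distinct : proj_distinct (map zvec_eval zlines).
Proof.
move=> m m'; rewrite size_map => m_lt m'_lt mm' /proj_eq_cross.
rewrite [nth _ _ m](nth_map zvec0 _ _ m_lt) [nth _ _ m'](nth_map zvec0 _ _ m'_lt).
rewrite -zvec_eval_cross => /eqP.
rewrite zvec_eval_eq0; apply/negP.
have /allP/(_ m) := zlines_independent; rewrite mem_iota0 => /(_ m_lt)/allP/(_ m').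
rewrite mem_iota0 => /(_ m'_lt) /orP[/eqP mm|neq]; first by case: mm'.
exact: neq.
Qed.

End Configuration.

Definition zmono := (nat * nat * nat)%type.
Definition zmono_add (m e : zmono) : zmono := (m.1.1 + e.1.1, m.1.2 + e.1.2, m.2 + e.2)%N.
Definition zmono_lt (m e : zmono) : bool :=
  ((m.1.1 < e.1.1) || (m.1.1 == e.1.1) && ((m.1.2 < e.1.2) || (m.1.2 == e.1.2) && (m.2 < e.2)))%N.

Definition zpoly := seq (zmono * zwt).

(* merge of two lexicographically sorted term lists; sortedness only matters for
   speed, the evaluation lemmas hold for arbitrary lists *)
Fixpoint zpoly_add (p q : zpoly) {struct p} : zpoly :=
  if p is (m, a) :: p' then
    let fix add_p (q : zpoly) : zpoly :=
      if q is (n, b) :: q' then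
        if m == n then (m, zwt_add a b) :: zpoly_add p' q'
        else if zmono_lt m n then (m, a) :: zpoly_add p' q
        else (n, b) :: add_p q'
      else p
    in add_p q
  else q.

Definition zpoly_shift (e : zmono) (a : zwt) (p : zpoly) : zpoly :=
  [seq (zmono_add t.1 e, zwt_mul a t.2) | t <- p].

Definition zpoly_mul (p q : zpoly) : zpoly :=
  foldr (fun t r => zpoly_add (zpoly_shift t.1 t.2 p) r) [::] q.

Definition cube_form (l : zvec) : zpoly :=
  let: (a, b, c) := zvec_cube l in [:: ((3, 0, 0)%N, a); ((0, 3, 0)%N, b); ((0, 0, 3)%N, c)].

Definition cube_prod (l : zvec) : zwt :=
  zwt_mul (zvec_cube l).1.1 (zwt_mul (zvec_cube l).1.2 (zvec_cube l).2).

(* the product of the linear forms of [diag_orbit l] *)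
Definition orbit_poly (l : zvec) : zpoly :=
  let: (a, b, c) := l in
  if zwt_eq0 a || zwt_eq0 c || zwt_eq0 b then cube_form l
  else let f := cube_form l in
    zpoly_add (zpoly_mul f (zpoly_mul f f))
      [:: ((3, 3, 3)%N, zwt_mul (zwt_of_Z (- 27%:R)%R) (cube_prod l))].

Definition zlines_product : zpoly :=
  foldr (fun l p => zpoly_mul p (orbit_poly l)) [:: ((0, 0, 0)%N, zwt_of_Z 1)] orbit_reps.

Definition zkey (x : zwt) : Z := th0 (zw0 x).
Definition zpoly_pivot (p : zpoly) : zwt :=
  head (zwt_of_Z 0) [seq t.2 | t <- p & zkey t.2 != 0].
(* when [zkey c != 0], this says x = (zkey x / zkey c) c *)
Definition rational_multiple (c x : zwt) : bool :=
  zwt_eq0 (zwt_sub (zwt_mul (zwt_of_Z (zkey c)) x) (zwt_mul (zwt_of_Z (zkey x)) c)).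

Definition zlines_pivot : zwt := zpoly_pivot zlines_product.

Lemma zlines_pivot_key : zkey zlines_pivot != 0.
Proof. by vm_compute. Qed.

Lemma zlines_product_rational : all (fun t => rational_multiple zlines_pivot t.2) zlines_product.
Proof. by vm_compute. Qed.

Section PolynomialEvaluation.
Variable C : numClosedFieldType.
Notation MP := {mpoly C[3]}.
Local Notation x := ('X_(@Ordinal 3 0 isT) : MP).
Local Notation y := ('X_(@Ordinal 3 1 isT) : MP).
Local Notation z := ('X_(@Ordinal 3 2 isT) : MP).
Local Notation eps j := (zwt_eval C (zunity j)).

Definition mono3 (m : zmono) : 'X_{1..3} := [multinom nth 0%N [:: m.1.1; m.1.2; m.2] i | i < 3].

Definition zpoly_eval (p : zpoly) : MP := \sum_(t <- p) zwt_eval C t.2 *: 'X_[mono3 t.1].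

Lemma zpoly_eval_cons m a p :
  zpoly_eval ((m, a) :: p) = zwt_eval C a *: 'X_[mono3 m] + zpoly_eval p.
Proof. by rewrite /zpoly_eval big_cons. Qed.

Lemma zpoly_evalD p q : zpoly_eval (zpoly_add p q) = zpoly_eval p + zpoly_eval q.
Proof.
elim: p q => [|[m a] p IHp] q; first by rewrite /zpoly_eval big_nil add0r.
elim: q => [|[n b] q IHq] /=; first by rewrite [zpoly_eval [::]]big_nil addr0.
rewrite !zpoly_eval_cons; case: eqP => [<-|_].
  by rewrite zpoly_eval_cons IHp zwt_evalD scalerDl addrACA.
case: ifP => _; rewrite zpoly_eval_cons ?IHp ?IHq zpoly_eval_cons; first by rewrite addrA.
by rewrite addrCA.
Qed.

Lemma mono3_0 : mono3 (0, 0, 0)%N = 0%MM.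
Proof. by apply/mnmP => i; rewrite mnm0E mnmE; case: i => -[|[|[|]]]. Qed.

Lemma mono3_add m e : mono3 (zmono_add m e) = (mono3 m + mono3 e)%MM.
Proof. by apply/mnmP => i; rewrite mnmDE !mnmE; case: i => -[|[|[|]]]. Qed.

Lemma mpolyX_mono3 i j k : 'X_[mono3 (i, j, k)] = x ^+ i * y ^+ j * z ^+ k.
Proof.
rewrite !mpolyXn -!mpolyXD; congr 'X_[_]; apply/mnmP => t.
by rewrite !mnmDE !mulmnE !mnm1E mnmE; case: t => -[|[|[|//]]] ? /=; lia.
Qed.

Lemma zpoly_eval_shift e a p :
  zpoly_eval (zpoly_shift e a p) = zwt_eval C a *: ('X_[mono3 e] * zpoly_eval p).
Proof.
rewrite /zpoly_eval big_map mulr_sumr scaler_sumr; apply: eq_bigr => -[m b] _ /=.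
by rewrite mono3_add mpolyXD zwt_evalM -scalerA -scalerAr mulrC.
Qed.

Lemma zpoly_evalM p q : zpoly_eval (zpoly_mul p q) = zpoly_eval p * zpoly_eval q.
Proof.
elim: q => [|[m a] q IHq] /=; first by rewrite /zpoly_eval !big_nil mulr0.
by rewrite zpoly_evalD IHq zpoly_eval_shift zpoly_eval_cons mulrDr -scalerAr mulrC.
Qed.

Lemma zpoly_eval_cube_form l : zpoly_eval (cube_form l) =
  zwt_eval C l.1.1 ^+ 3 *: x ^+ 3 + zwt_eval C l.1.2 ^+ 3 *: y ^+ 3 + zwt_eval C l.2 ^+ 3 *: z ^+ 3.
Proof.
case: l => [[a b] c]; rewrite /cube_form /= !zpoly_eval_cons /zpoly_eval big_nil addr0.
rewrite !mpolyX_mono3 !zwt_evalM !expr0 !mul1r !mulr1 addrA.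
by congr (_ *: _ + _ *: _ + _ *: _); rewrite exprS expr2.
Qed.

Lemma omega_sqMP : (omega C)%:MP ^+ 2 = - 1 - (omega C)%:MP :> MP.
Proof. by rewrite -rmorphXn omega_sq rmorphB rmorphN rmorph1. Qed.

Lemma eps_MP : ((eps 0)%:MP = 1 :> MP) * ((eps 1)%:MP = (omega C)%:MP :> MP)
  * ((eps 2)%:MP = - 1 - (omega C)%:MP :> MP).
Proof.
rewrite /= !zwt_eval_Z zwt_eval_omega zwt_evalN zwt_evalD zwt_eval_Z zwt_eval_omega !rmorph1.
by rewrite rmorphN rmorphD rmorph1 opprD.
Qed.

Lemma prod_unity3 (p q : MP) :
  \prod_(j <- iota 0 3) (p + eps j *: q) = p ^+ 3 + q ^+ 3.
Proof.
rewrite /= !big_cons big_nil -!mul_mpolyC !eps_MP.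
by have omega_sq := omega_sqMP; ring: omega_sq.
Qed.

Lemma prod_unity9 (a b c : MP) :
  \prod_(i <- iota 0 3) \prod_(j <- iota 0 3) (eps i *: a + eps j *: b + c) =
  (a ^+ 3 + b ^+ 3 + c ^+ 3) ^+ 3 - 27 * (a * b * c) ^+ 3.
Proof.
rewrite /= !big_cons !big_nil -!mul_mpolyC !eps_MP.
by have omega_sq := omega_sqMP; ring: omega_sq.
Qed.

Lemma zwt_eval_cube_prod l :
  zwt_eval C (cube_prod l) = (zwt_eval C l.1.1 * zwt_eval C l.1.2 * zwt_eval C l.2) ^+ 3.
Proof. by rewrite /cube_prod /zvec_cube /= !zwt_evalM; ring. Qed.

Lemma linform_zvec u v w :
  linform (zvec_eval C (u, v, w)) = zwt_eval C u *: x + zwt_eval C v *: y + zwt_eval C w *: z.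
Proof. by []. Qed.

Lemma prod_diag_orbit l :
  \prod_(v <- diag_orbit l) linform (zvec_eval C v) = zpoly_eval (orbit_poly l).
Proof.
case: l => [[a b] c]; rewrite /diag_orbit /orbit_poly.
set A := zwt_eval C a; set B := zwt_eval C b; set D := zwt_eval C c.
case: ifP => [ac|ac].
  rewrite -[RHS]/(zpoly_eval (cube_form (a, b, c))) big_map zpoly_eval_cube_form /=.
  transitivity (\prod_(j <- iota 0 3) ((A *: x + D *: z) + eps j *: (B *: y))).
    by apply: eq_bigr => j _; rewrite linform_zvec zwt_evalM -scalerA addrAC.
  rewrite prod_unity3 -!mul_mpolyC !rmorphXn -/A -/B -/D.
  by case/orP: ac; rewrite -!(zwt_eval_eq0 C) -/A -/D => /eqP->; rewrite rmorph0; ring.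
case: ifP => [b0|b0].
  rewrite -[RHS]/(zpoly_eval (cube_form (a, b, c))) big_map zpoly_eval_cube_form /=.
  move: b0; rewrite -(zwt_eval_eq0 C) -/B => /eqP b0.
  transitivity (\prod_(i <- iota 0 3) (D *: z + eps i *: (A *: x))).
    by apply: eq_bigr => i _; rewrite linform_zvec zwt_evalM -scalerA -/B b0 scale0r addr0 addrC.
  by rewrite prod_unity3 -!mul_mpolyC !rmorphXn -/A -/B -/D b0 rmorph0; ring.
rewrite big_allpairs_dep.
transitivity (\prod_(i <- iota 0 3) \prod_(j <- iota 0 3)
                (eps i *: (A *: x) + eps j *: (B *: y) + D *: z)).
  apply: eq_bigr => i _; apply: eq_bigr => j _.
  by rewrite linform_zvec !zwt_evalM -!scalerA.
rewrite prod_unity9 zpoly_evalD !zpoly_evalM zpoly_eval_cube_form zpoly_eval_cons.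
rewrite [zpoly_eval [::]]big_nil addr0 zwt_evalM zwt_eval_Z zwt_eval_cube_prod mpolyX_mono3.
rewrite rmorphN rmorph_nat /= -!mul_mpolyC !(rmorphM, rmorphXn, rmorphN, rmorph_nat) -/A -/B -/D.
ring.
Qed.

Lemma prod_zlines : \prod_(w <- map (zvec_eval C) zlines) linform w = zpoly_eval zlines_product.
Proof.
rewrite big_map /zlines big_flatten big_map /zlines_product.
elim: orbit_reps => [|l ls IHls].
  rewrite big_nil zpoly_eval_cons /zpoly_eval big_nil addr0 zwt_eval_Z rmorph1 scale1r.
  by rewrite mono3_0 mpolyX0.
by rewrite big_cons IHls zpoly_evalM prod_diag_orbit mulrC.
Qed.

Definition zpoly_int_part (p : zpoly) : MP := \sum_(t <- p) Zr C (zkey t.2) *: 'X_[mono3 t.1].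

Lemma int_mpoly_int_part p : int_mpoly (zpoly_int_part p).
Proof.
move=> m; exists (\sum_(t <- p) int_of_Z (zkey t.2) * (mono3 t.1 == m)%:R).
rewrite /zpoly_int_part raddf_sum rmorph_sum; apply: eq_bigr => t _.
by rewrite /= mcoeffZ mcoeffX rmorphM rmorph_nat.
Qed.

Lemma zwt_eval_key_neq0 c : zkey c != 0 -> zwt_eval C c != 0.
Proof.
apply: contraNN; rewrite zwt_eval_eq0 => /andP[/and3P[/eqP key0 _ _] _].
by rewrite /zkey key0.
Qed.

Lemma zpoly_eval_rational c p : zkey c != 0 ->
  all (fun t => rational_multiple c t.2) p ->
  zpoly_eval p = (zwt_eval C c / Zr C (zkey c)) *: zpoly_int_part p.
Proof.
move=> c0; have kc0 : Zr C (zkey c) != 0 by rewrite Zr_eq0.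
elim: p => [|[m x] p IHp] /=; first by rewrite /zpoly_eval /zpoly_int_part !big_nil scaler0.
case/andP=> cx /IHp {}IHp; rewrite zpoly_eval_cons IHp /zpoly_int_part big_cons scalerDr.
congr (_ + _); rewrite scalerA; congr (_ *: _).
move: cx; rewrite /rational_multiple -(zwt_eval_eq0 C) zwt_evalB !zwt_evalM !zwt_eval_Z.
by rewrite subr_eq0 => /eqP cx; rewrite mulrAC [zwt_eval C c * _]mulrC -cx mulrAC divff ?mul1r.
Qed.

End PolynomialEvaluation.

Theorem mainTheorem9 (C : numClosedFieldType) (s : seq (vec3 C)) :
  (forall l, l \in s -> sextactic_line l) ->
  (forall l, sextactic_line l -> exists2 l', l' \in s & proj_eq l l') ->
  (forall i j, (i < size s)%N -> (j < size s)%N -> i <> j ->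
     ~ proj_eq (nth (0, 0, 0) s i) (nth (0, 0, 0) s j)) ->
  exists c : C, c != 0 /\ int_mpoly (c *: \prod_(l <- s) linform l).
Proof.
move=> s_lines s_complete s_distinct.
have [k k0 ->] := prod_linform_proj_perm
  (fun l l_in => (s_lines l l_in).1) (fun w w_in => (zlines_sextactic w_in).1)
  s_distinct (@zlines_proj_distinct C)
  (fun l l_in => sextactic_line_zline (s_lines l l_in))
  (fun w w_in => s_complete w (zlines_sextactic w_in)).
rewrite prod_zlines (zpoly_eval_rational C zlines_pivot_key zlines_product_rational) scalerA.
set c := k * _; have c0 : c != 0.
  apply: mulf_neq0 k0 (mulf_neq0 (zwt_eval_key_neq0 C zlines_pivot_key) _).
  rewrite invr_eq0 Zr_eq0; exact: zlines_pivot_key.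
exists c^-1; split; first by rewrite invr_eq0.
by rewrite scalerA mulVf // scale1r; apply: int_mpoly_int_part.
Qed.
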